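(* Let $N=\{1,\ldots,n\}$ and $\mathcal{X}=\{-1,1\}^n$. A random voting rule $\bar\phi:\mathcal{X}\to[-1,1]$ is robust if and only if there exists $w\in\mathbb{R}_+^n$ such that for every $x\in\mathcal{X}$, $\bar\phi(x)$ and $\sum_{i\in N}w_ix_i$ are both nonzero and have the same sign, i.e. $\bar\phi(x)\sum_{i\in N}w_ix_i>0$ for all $x\in\mathcal{X}$.
   Context: A random voting rule $\bar\phi$ chooses outcome $1$ with probability $(1+\bar\phi(x))/2$ and $-1$ with probability $(1-\bar\phi(x))/2$ at profile $x$. Under $p\in\Delta(\mathcal{X})$ (probability distributions on $\mathcal{X}$), the responsiveness of individual $i$ is $(E_p[\bar\phi(x)x_i]+1)/2$. $\bar\phi$ is robust if for every $p\in\Delta(\mathcal{X})$ there is some $i\in N$ with $E_p[\bar\phi(x)x_i]>0$ (responsiveness strictly greater than $1/2$). *)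

From mathcomp Require Import all_boot all_order all_algebra.
Set Implicit Arguments. Unset Strict Implicit. Unset Printing Implicit Defensive.
Import Order.TTheory GRing.Theory Num.Theory.
Local Open Scope ring_scope.

(* Voters N = {1,...,n} are modelled by 'I_n. A profile x in X = {-1,1}^n is
   encoded as a finite function 'I_n -> bool, with coordinate x_i = sgn (x i)
   where sgn true = 1 and sgn false = -1. *)
Definition profile (n : nat) := {ffun 'I_n -> bool}.

Definition sgnb (R : ringType) (b : bool) : R := if b then 1 else -1.

Definition xcoord (R : ringType) n (x : profile n) (i : 'I_n) : R := sgnb R (x i).

Definition random_voting_rule (R : realFieldType) n (phi : profile n -> R) : Prop :=
  forall x, -1 <= phi x <= 1.

Definition is_distribution (R : realFieldType) n (p : profile n -> R) : Prop :=
  (forall x, 0 <= p x) /\ \sum_(x : profile n) p x = 1.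

Definition expect_phi_x (R : realFieldType) n (p phi : profile n -> R) (i : 'I_n) : R :=
  \sum_(x : profile n) p x * (phi x * xcoord R x i).

Definition responsiveness (R : realFieldType) n (p phi : profile n -> R) (i : 'I_n) : R :=
  (expect_phi_x p phi i + 1) / 2.

Definition robust (R : realFieldType) n (phi : profile n -> R) : Prop :=
  forall p : profile n -> R, is_distribution p ->
    exists i : 'I_n, 0 < expect_phi_x p phi i.

From mathcomp Require Import all_boot all_order all_algebra.
From mathcomp Require Import ring lra.
Import Order.TTheory GRing.Theory Num.Theory.
Local Open Scope ring_scope.
Set Implicit Arguments. Unset Strict Implicit. Unset Printing Implicit Defensive.

(* Robustness fails iff some distribution p gives E_p[phi(x) x_i] <= 0 for
   every i, i.e. iff a nonnegative, nonzero combination of the vectors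
   phi(x) x (x in X) and of the unit vectors e_i of R^n vanishes.  By Gordan's
   theorem of the alternative, this happens iff there is no w with
   phi(x) <w, x> > 0 for all x and w_i > 0 for all i.  Gordan's theorem holds
   over any ordered field and is proved by Fourier-Motzkin elimination of the
   last coordinate.  Conversely, given such a w >= 0,
   sum_i w_i E_p[phi(x) x_i] = E_p[phi(x) <w, x>] > 0 forces some
   E_p[phi(x) x_i] > 0. *)


Lemma exists_separating_threshold (R : realFieldType) (I : finType)
    (P Q : pred I) (f : I -> R) :
  (forall p q, P p -> Q q -> f p < f q) ->
  exists t, (forall p, P p -> f p < t) /\ (forall q, Q q -> t < f q).
Proof.
move=> ltPQ.
have [p0 Pp0|P0] := pickP P; have [q0 Qq0|Q0] := pickP Q.
- have [pm Ppm maxP] := arg_maxP f Pp0; have [qm Qqm minQ] := arg_minP f Qq0.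
  have := ltPQ _ _ Ppm Qqm => lt_m.
  exists ((f pm + f qm) / 2); split=> [p /maxP /= le_f | q /minQ le_f]; lra.
- have [pm Ppm maxP] := arg_maxP f Pp0.
  exists (f pm + 1); split=> [p /maxP /= le_f | q]; [lra | by rewrite Q0].
- have [qm Qqm minQ] := arg_minP f Qq0.
  exists (f qm - 1); split=> [p | q /minQ le_f]; [by rewrite P0 | lra].
- by exists 0; split=> k; rewrite ?P0 ?Q0.
Qed.

Section Gordan.
Variable R : realFieldType.

(* Vectors of R^d are functions nat -> R of which only the first d coordinates
   are read, so that dropping the last coordinate of R^(d+1) needs no
   reindexing. *)
Definition dot (d : nat) (v w : nat -> R) : R := \sum_(i < d) v i * w i.

Definition gordan_certificate d (I : finType) (S : pred I) (a : I -> nat -> R)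
    (c : I -> R) :=
  [/\ forall k, S k -> 0 <= c k, exists2 k, S k & 0 < c k &
      forall i, (i < d)%N -> \sum_(k | S k) c k * a k i = 0].

Definition strictly_feasible d (I : finType) (S : pred I) (a : I -> nat -> R) :=
  exists w, forall k, S k -> 0 < dot d (a k) w.

Lemma dot_extend d v w t :
  dot d.+1 v (fun i => if i == d then t else w i) = dot d v w + v d * t.
Proof.
rewrite /dot big_ord_recr /= eqxx; congr (_ + _).
by apply: eq_bigr => i _; rewrite ltn_eqF.
Qed.

Section Elimination.
Variables (d : nat) (I : finType) (S : pred I) (a : I -> nat -> R).

(* Fourier-Motzkin step on the last coordinate d: keep the rows with a_k,d = 0
   and combine every row p with a_p,d > 0 with every row q with a_q,d < 0. *)
Definition elim_support : pred (I + I * I) := fun k' =>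
  match k' with
  | inl k => S k && (a k d == 0)
  | inr (p, q) => [&& S p, S q, 0 < a p d & a q d < 0]
  end.

Definition elim_comb (g : I -> R) (k' : I + I * I) : R :=
  match k' with
  | inl k => g k
  | inr (p, q) => a p d * g q - a q d * g p
  end.

Definition elim_rows (k' : I + I * I) (i : nat) : R := elim_comb (a ^~ i) k'.

Definition lift_weights (c' : I + I * I -> R) (k : I) : R :=
  c' (inl k) + \sum_q c' (inr (k, q)) * - a q d + \sum_p c' (inr (p, k)) * a p d.

Lemma lift_weightsE c' g :
  \sum_k lift_weights c' k * g k = \sum_k' c' k' * elim_comb g k'.
Proof.
rewrite big_sumType /=; under eq_bigr do rewrite !mulrDl !mulr_suml.
rewrite !big_split /= -addrA; congr (_ + _).
rewrite [X in _ + X]exchange_big -big_split /=.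
under eq_bigr do rewrite -big_split /=.
by rewrite pair_bigA; apply: eq_bigr => -[p q] _ /=; ring.
Qed.

Lemma dot_elim_rows k' w :
  dot d (elim_rows k') w = elim_comb (fun k => dot d (a k) w) k'.
Proof.
case: k' => [k | [p q]] //=; rewrite /dot !mulr_sumr -sumrB.
by apply: eq_bigr => i _ /=; ring.
Qed.

Lemma elim_support_pair p q :
  elim_support (inr (p, q)) -> [/\ S p, S q, 0 < a p d & a q d < 0].
Proof. by move/and4P. Qed.

Lemma elim_comb1_gt0 k' : elim_support k' -> 0 < elim_comb (fun=> 1) k'.
Proof.
case: k' => [k _ | [p q] /elim_support_pair [_ _ ap aq]] /=; rewrite ?ltr01 //.
by rewrite !mulr1 subr_gt0 (lt_trans aq ap).
Qed.

Lemma gordan_certificate_lift c' :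
  gordan_certificate d elim_support elim_rows c' ->
  exists c, gordan_certificate d.+1 S a c.
Proof.
case=> c'_ge0 [k0' supp_k0' c'_k0_gt0] c'_comb.
pose m k' := if elim_support k' then c' k' else 0.
have m_ge0 k' : 0 <= m k' by rewrite /m; case: ifP => // /c'_ge0.
have sum_m F : \sum_(k' | elim_support k') c' k' * F k' = \sum_k' m k' * F k'.
  by rewrite big_mkcond; apply: eq_bigr => k' _; rewrite /m; case: ifP; rewrite ?mul0r.
have m_mul_ge0 k' (F : R) : (elim_support k' -> 0 <= F) -> 0 <= m k' * F.
  by rewrite /m; case: ifP => [supp F_ge0 | _]; rewrite ?mul0r ?mulr_ge0 ?c'_ge0 ?F_ge0.
pose c := lift_weights m.
have c_out k : ~~ S k -> c k = 0.
  move=> /negbTE nSk; rewrite /c /lift_weights /m /= nSk /= add0r.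
  by rewrite !big1 ?addr0 // => p _; rewrite /= ?andbF mul0r.
have c_ge0 k : 0 <= c k.
  rewrite !addr_ge0 ?sumr_ge0 // => p _; apply: m_mul_ge0.
    by case/elim_support_pair => _ _ _ /ltW; rewrite oppr_ge0.
  by case/elim_support_pair => _ _ /ltW.
have sum_S F : \sum_(k | S k) c k * F k = \sum_k c k * F k.
  rewrite big_mkcond; apply: eq_bigr => k _.
  by case: ifP => // /negbT /c_out ->; rewrite mul0r.
exists c; split=> [k _ | | i].
- exact: c_ge0.
- have : \sum_k c k * 1 != 0.
    rewrite lift_weightsE psumr_neq0 => [|k' _]; last first.
      by apply: m_mul_ge0 => /elim_comb1_gt0/ltW.
    apply/hasP; exists k0'; rewrite ?mem_index_enum //=.
    by rewrite /m supp_k0' mulr_gt0 // elim_comb1_gt0.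
  move=> /eqP/psumr_neq0P [| k /andP [_]]; first by move=> k _; rewrite mulr1.
  rewrite mulr1 => c_k_gt0; exists k => //.
  by apply/negP => /negP /c_out c_k0; rewrite c_k0 ltxx in c_k_gt0.
- rewrite ltnS leq_eqVlt sum_S lift_weightsE -sum_m => /orP [/eqP -> | /c'_comb //].
  apply: big1 => -[k /andP [_ /eqP ak] | [p q] _] /=; first by rewrite ak mulr0.
  by rewrite [X in _ * X](_ : _ = 0) ?mulr0 //; ring.
Qed.

Lemma strictly_feasible_lift :
  strictly_feasible d elim_support elim_rows -> strictly_feasible d.+1 S a.
Proof.
case=> w' w'_pos; pose v k := dot d (a k) w'.
have v_gt0 k : S k -> a k d = 0 -> 0 < v k.
  by move=> Sk ak; have := w'_pos (inl k); rewrite /= Sk ak eqxx; apply.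
have v_pair p q : S p -> S q -> 0 < a p d -> a q d < 0 ->
    0 < a p d * v q - a q d * v p.
  move=> Sp Sq ap aq; have := w'_pos (inr (p, q)).
  by rewrite dot_elim_rows /= Sp Sq ap aq; apply.
(* The last coordinate t must satisfy f p < t when a_p,d > 0 and t < f q when
   a_q,d < 0; the eliminated rows say exactly that every f p is below every f q. *)
pose f k := - v k / a k d.
have [t [f_lt_t t_lt_f]] : exists t,
    (forall p, S p && (0 < a p d) -> f p < t) /\
    (forall q, S q && (a q d < 0) -> t < f q).
  apply: exists_separating_threshold => p q /andP [Sp ap] /andP [Sq aq].
  have aq_neg : 0 < - a q d by rewrite oppr_gt0.
  rewrite -subr_gt0 (_ : f q - f p = (a p d * v q - a q d * v p) / (a p d * - a q d)).
    by rewrite divr_gt0 ?mulr_gt0 ?v_pair.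
  by rewrite /f; field; rewrite ltr0_neq0 ?lt0r_neq0.
exists (fun i => if i == d then t else w' i) => k Sk; rewrite dot_extend -/(v k).
have [ak | ak | ak] := ltrgtP (a k d) 0; last by rewrite ak mul0r addr0 v_gt0.
- rewrite (_ : _ + _ = - a k d * (f k - t)); last by rewrite /f; field; rewrite ltr0_neq0.
  by rewrite mulr_gt0 ?oppr_gt0 ?subr_gt0 ?t_lt_f ?Sk.
- rewrite (_ : _ + _ = a k d * (t - f k)); last by rewrite /f; field; rewrite lt0r_neq0.
  by rewrite mulr_gt0 ?subr_gt0 ?f_lt_t ?Sk.
Qed.

End Elimination.

Theorem gordan d (I : finType) (S : pred I) (a : I -> nat -> R) :
  (forall c, ~ gordan_certificate d S a c) -> strictly_feasible d S a.
Proof.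
elim: d I S a => [|d IH] I S a no_cert.
  exists (fun _ => 0) => k Sk; exfalso.
  apply: (no_cert (fun j => (j == k)%:R)); split=> [j _ | | //].
  - exact: ler0n.
  - by exists k; rewrite ?eqxx ?ltr01.
apply: strictly_feasible_lift; apply: IH => c' /gordan_certificate_lift [c].
exact: no_cert.
Qed.

End Gordan.

Lemma expectation_gt0 (R : realFieldType) (T : finType) (p f : T -> R) :
  (forall x, 0 <= p x) -> \sum_x p x = 1 -> (forall x, 0 < f x) ->
  0 < \sum_x p x * f x.
Proof.
move=> p_ge0 p_sum1 f_gt0.
have : \sum_x p x != 0 by rewrite p_sum1 oner_neq0.
rewrite psumr_neq0 // => /hasP [x0 _ p_x0_gt0].
have pf_ge0 x : 0 <= p x * f x by rewrite mulr_ge0 // ltW.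
rewrite lt_def sumr_ge0 ?andbT ?psumr_neq0 //.
by apply/hasP; exists x0; rewrite ?mem_index_enum //= mulr_gt0.
Qed.

Section Robustness.
Variables (R : realFieldType) (n : nat) (phi : profile n -> R).

Definition vote_rows (k : profile n + 'I_n) (i : nat) : R :=
  match k with
  | inl x => if insub i is Some j then phi x * xcoord R x j else 0
  | inr j => (i == j)%:R
  end.

Lemma dot_vote_rows_profile w x :
  dot n (vote_rows (inl x)) w = phi x * \sum_(i < n) w i * xcoord R x i.
Proof.
by rewrite /dot mulr_sumr; apply: eq_bigr => i _ /=; rewrite valK; ring.
Qed.

Lemma dot_vote_rows_unit w (j : 'I_n) : dot n (vote_rows (inr j)) w = w j.
Proof.
rewrite /dot (bigD1 j) //= eqxx mul1r big1 ?addr0 // => i /negbTE ij.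
by rewrite val_eqE ij mul0r.
Qed.

Lemma vote_rows_comb (c : profile n + 'I_n -> R) (j : 'I_n) :
  \sum_k c k * vote_rows k j =
  \sum_x c (inl x) * (phi x * xcoord R x j) + c (inr j).
Proof.
rewrite big_sumType /=; under eq_bigr do rewrite valK; congr (_ + _).
rewrite (bigD1 j) //= eqxx mulr1 big1 ?addr0 // => i /negbTE ij.
by rewrite val_eqE eq_sym ij mulr0.
Qed.

Lemma robust_no_certificate :
  robust phi -> forall c, ~ gordan_certificate n predT vote_rows c.
Proof.
move=> rob c [c_ge0 [k _ c_k_gt0] c_comb].
have comb j : \sum_x c (inl x) * (phi x * xcoord R x j) = - c (inr j).
  by apply/eqP; rewrite -addr_eq0 -vote_rows_comb; apply/eqP/c_comb.
pose s := \sum_x c (inl x).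
have [s0 | s_neq0] := eqVneq s 0.
  have c_inl x : c (inl x) = 0.
    exact: (psumr_eq0P (fun x _ => c_ge0 (inl x) isT) s0).
  have c_inr j : c (inr j) = 0.
    by apply/eqP; rewrite -oppr_eq0 -comb big1 // => x _; rewrite c_inl mul0r.
  by case: k c_k_gt0 => [x | j]; rewrite ?c_inl ?c_inr ltxx.
have s_gt0 : 0 < s by rewrite lt_def s_neq0 sumr_ge0 // => x _; apply: c_ge0.
have [|j] := rob (fun x => c (inl x) / s).
  split=> [x | ]; first by rewrite divr_ge0 ?c_ge0 ?ltW.
  by rewrite -mulr_suml divff.
rewrite /expect_phi_x; under eq_bigr do rewrite mulrAC.
by rewrite -mulr_suml comb pmulr_lgt0 ?invr_gt0 // oppr_gt0 ltNge c_ge0.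
Qed.

Lemma weighted_expect_phi_x (p : profile n -> R) (w : 'I_n -> R) :
  \sum_i w i * expect_phi_x p phi i =
  \sum_x p x * (phi x * \sum_(i < n) w i * xcoord R x i).
Proof.
rewrite /expect_phi_x; under eq_bigr do rewrite mulr_sumr.
rewrite exchange_big; apply: eq_bigr => x _ /=.
by rewrite !mulr_sumr; apply: eq_bigr => i _; ring.
Qed.

Lemma robust_of_weights (w : 'I_n -> R) :
  (forall i, 0 <= w i) ->
  (forall x, 0 < phi x * \sum_(i < n) w i * xcoord R x i) -> robust phi.
Proof.
move=> w_ge0 w_sep p [p_ge0 p_sum1].
have := expectation_gt0 p_ge0 p_sum1 w_sep; rewrite -weighted_expect_phi_x.
have [i E_gt0 _ | E_le0] := pickP (fun i => 0 < expect_phi_x p phi i); first by exists i.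
rewrite ltNge sumr_le0 // => i _; rewrite mulr_ge0_le0 //.
by rewrite leNgt; apply/negbT/E_le0.
Qed.

End Robustness.

Theorem propositionA (R : realFieldType) (n : nat) (phi : profile n -> R) :
  random_voting_rule phi ->
  (robust phi <->
   exists w : 'I_n -> R, (forall i, 0 <= w i) /\
     forall x : profile n, 0 < phi x * \sum_(i < n) w i * xcoord R x i).
Proof.
move=> _; split=> [/robust_no_certificate/gordan [w w_pos] | [w [w_ge0 w_sep]]].
  exists (fun j : 'I_n => w j); split=> [j | x].
    by apply: ltW; have := w_pos (inr j) isT; rewrite dot_vote_rows_unit.
  by have := w_pos (inl x) isT; rewrite dot_vote_rows_profile.
exact: robust_of_weights w_ge0 w_sep.
Qed.
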